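(* Let $\mathcal{G}$ be a simple MAG with a given topological ordering of its vertices. Let $i$ be a vertex and let $\{i,j_1\},\dots,\{i,j_k\}$ be all heads of size two containing $i$ whose other element precedes $i$, ordered so that $j_1<\dots<j_k<i$. Then $$\mathrm{pa}(i)=\mathrm{tail}(\{i\})\subseteq\mathrm{tail}(\{i,j_1\})\subseteq\cdots\subseteq\mathrm{tail}(\{i,j_k\}).$$
   Context: A MAG is an acyclic directed mixed graph (directed and bidirected edges, no directed cycles) with $\mathrm{sib}(v)\cap\mathrm{an}(v)=\emptyset$ for all $v$ and in which every nonadjacent pair of vertices is m-separated by some set. A topological ordering is an ordering of the vertices in which every ancestor of $v$ precedes $v$. $\mathrm{barren}(W)=\{w\in W:\mathrm{de}(w)\cap W=\{w\}\}$; a nonempty set $H$ is a head if $\mathrm{barren}(H)=H$ and $H$ lies in a single district (bidirected-connected component) of the induced subgraph $\mathcal{G}_{\mathrm{an}(H)}$; $\mathrm{tail}(H)=(\mathrm{dis}_{\mathrm{an}(H)}(H)\setminus H)\cup\mathrm{pa}(\mathrm{dis}_{\mathrm{an}(H)}(H))$, where $\mathrm{dis}_{\mathrm{an}(H)}(H)$ is the district of $\mathcal{G}_{\mathrm{an}(H)}$ containing $H$. A MAG is simple if it has no head with more than two elements. *)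

(* Mixed graphs on a finite vertex type T:
   d x y  <->  directed edge x -> y ;  b x y <-> bidirected edge x <-> y. *)
From mathcomp Require Import all_boot.
Set Implicit Arguments. Unset Strict Implicit. Unset Printing Implicit Defensive.

Section MAG.
Variables (T : finType) (d b : rel T).

Definition an (v : T) : {set T} := [set u | connect d u v].
Definition anS (S : {set T}) : {set T} := \bigcup_(v in S) an v.
Definition de (v : T) : {set T} := [set u | connect d v u].
Definition pa (v : T) : {set T} := [set u | d u v].
Definition paS (S : {set T}) : {set T} := \bigcup_(v in S) pa v.
Definition sib (v : T) : {set T} := [set u | b v u].

Definition adj (u v : T) : bool := [|| d u v, d v u | b u v].
(* the edge between u and v has an arrowhead at v *)
Definition arrow_at (u v : T) : bool := d u v || b u v || b v u.
Definition collider (u v w : T) : bool := arrow_at u v && arrow_at w v.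

(* s describes the path x :: s (a path of distinct vertices with consecutive
   vertices adjacent) ending at y; it is m-connecting given Z *)
Definition mconnecting (x y : T) (Z : {set T}) (s : seq T) : Prop :=
  [/\ path adj x s, last x s = y, uniq (x :: s), x \notin Z /\ y \notin Z &
      forall k, 0 < k < size s ->
        let u := nth x (x :: s) k.-1 in
        let v := nth x (x :: s) k in
        let w := nth x (x :: s) k.+1 in
        if collider u v w then v \in anS Z else v \notin Z].

Definition msep (x y : T) (Z : {set T}) : Prop :=
  x \notin Z /\ y \notin Z /\ forall s, ~ mconnecting x y Z s.

Definition is_MAG : Prop :=
  [/\ symmetric b,
      (forall x y, d x y -> ~~ connect d y x),
      (forall v, sib v :&: an v = set0) &
      (forall x y, x != y -> ~~ adj x y -> exists Z, msep x y Z)].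

(* topological ordering, encoded by an injective position map *)
Definition topological (pos : T -> nat) : Prop :=
  injective pos /\ forall u v, u != v -> u \in an v -> pos u < pos v.

Definition barren (W : {set T}) : {set T} :=
  [set w in W | de w :&: W == [set w]].

(* district of x in the induced subgraph G_A *)
Definition brel_in (A : {set T}) : rel T :=
  [rel x y | [&& b x y, x \in A & y \in A]].
Definition dis_in (A : {set T}) (x : T) : {set T} :=
  [set y | (x \in A) && connect (brel_in A) x y].

Definition is_head (H : {set T}) : Prop :=
  [/\ H != set0, barren H = H &
      exists2 h, h \in H & H \subset dis_in (anS H) h].

(* the district of G_{an(H)} containing H (union of the districts of its
   elements; for a head these all coincide) *)
Definition disH (H : {set T}) : {set T} :=
  \bigcup_(h in H) dis_in (anS H) h.

Definition tail (H : {set T}) : {set T} :=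
  (disH H :\: H) :|: paS (disH H).

Definition simple_MAG : Prop := forall H, is_head H -> #|H| <= 2.

End MAG.

(* Part one holds because a sibling of i is never an ancestor of i, so the
   district of i in G_an(i) is {i}; part two because i lies in the district
   of any head containing it.  For part three, take heads {i,j} and {i,j'}
   with j < j' < i.  If j were not an ancestor of j', then {i,j,j'} would be
   barren and bidirected-connected through i, i.e. a head of size three,
   which simplicity forbids.  Hence an{i,j} is contained in an{i,j'}, so the
   district of i only grows, while j' itself stays outside an{i,j}: it is
   neither an ancestor of i (barrenness) nor of j (topological order). *)
From mathcomp Require Import all_boot.
Set Implicit Arguments. Unset Strict Implicit.

Section MixedGraph.
Variables (T : finType) (d b : rel T).

Lemma mem_an v : v \in an d v.
Proof. by rewrite inE connect0. Qed.

Lemma an_subset u v : connect d u v -> an d u \subset an d v.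
Proof. by move=> cuv; apply/subsetP => x; rewrite !inE => /connect_trans; apply. Qed.

Lemma anS_set2 u v : anS d [set u; v] = an d u :|: an d v.
Proof. by rewrite /anS bigcup_setU !big_set1. Qed.

Lemma topological_connect pos u v :
  topological d pos -> connect d u v -> pos u <= pos v.
Proof.
case=> _ pos_an cuv; have [-> // | neq_uv] := eqVneq u v.
by rewrite ltnW // pos_an // inE.
Qed.

Lemma barren_idP (H : {set T}) :
  barren d H = H <-> {in H &, forall u v, connect d u v -> u = v}.
Proof.
split=> [barH u v uH vH cuv | connect_eq].
  move: uH; rewrite -barH inE => /andP[_ /eqP de_u].
  have : v \in de d u :&: H by rewrite inE [v \in de d u]inE cuv vH.
  by rewrite de_u inE => /eqP.
apply/setP => w; rewrite inE andb_idr // => wH.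
apply/eqP/setP => u; rewrite !inE.
apply/andP/eqP => [[cwu uH] | ->]; last by rewrite connect0.
by rewrite (connect_eq w u).
Qed.

Lemma head_connect_eq (H : {set T}) u v :
  is_head d b H -> u \in H -> v \in H -> connect d u v -> u = v.
Proof. by case=> _ /barren_idP connect_eq _; apply: connect_eq. Qed.

Lemma dis_in_sub (A : {set T}) x : dis_in b A x \subset A.
Proof.
apply/subsetP => y; rewrite inE => /andP[xA /connectP[p pth ->]].
elim: p x xA pth => [|z p IHp] x xA //= /andP[/and3P[_ _ zA] pth].
exact: IHp zA pth.
Qed.

Lemma dis_in_subset (A B : {set T}) x :
  A \subset B -> dis_in b A x \subset dis_in b B x.
Proof.
move=> sAB; apply/subsetP => y; rewrite !inE => /andP[xA cxy].
rewrite (subsetP sAB _ xA); apply: connect_sub cxy => u v /and3P[buv uA vA].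
by apply: connect1; rewrite /brel_in /= buv !(subsetP sAB).
Qed.

Lemma mem_disH (H : {set T}) h : h \in H -> h \in disH d b H.
Proof.
move=> hH; apply/bigcupP; exists h => //.
by rewrite inE connect0 andbT; apply/bigcupP; exists h; rewrite // mem_an.
Qed.

Lemma pa_subset_tail (H : {set T}) h : h \in H -> pa d h \subset tail d b H.
Proof. by move=> hH; rewrite subsetU // orbC bigcup_sup // mem_disH. Qed.

Lemma tail_set1 v :
  (forall w, sib b w :&: an d w = set0) -> tail d b [set v] = pa d v.
Proof.
move=> ancestral.
have dis_v : dis_in b (an d v) v = [set v].
  apply/setP => y; rewrite !inE connect0 /=; apply/idP/eqP => [|->]; last first.
    exact: connect0.
  case/connectP => [[|z p] //= /andP[/and3P[bvz _ z_an] _] _].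
  have : z \in sib b v :&: an d v by rewrite inE [z \in sib b v]inE bvz.
  by rewrite ancestral inE.
by rewrite /tail /disH /anS !big_set1 dis_v setDv set0U /paS big_set1.
Qed.

Section Symmetric.
Hypothesis b_sym : symmetric b.

Lemma dis_in_eq (A : {set T}) x y :
  y \in dis_in b A x -> dis_in b A y = dis_in b A x.
Proof.
have brel_sym : connect_sym (brel_in b A).
  by apply: sym_connect_sym => u v; rewrite /brel_in /= b_sym (andbC (u \in A)).
move=> yx; have yA := subsetP (dis_in_sub A x) _ yx.
move: yx; rewrite inE => /andP[xA cxy].
by apply/setP => z; rewrite !inE xA yA (same_connect brel_sym cxy).
Qed.

Lemma disH_head (H : {set T}) h :
  is_head d b H -> h \in H -> disH d b H = dis_in b (anS d H) h.
Proof.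
case=> _ _ [h0 _ /subsetP H_dis] hH.
have dis_h0 u : u \in H -> dis_in b (anS d H) u = dis_in b (anS d H) h0.
  by move/H_dis/dis_in_eq.
apply/setP => x; apply/bigcupP/idP => [[u uH] | xh]; last by exists h.
by rewrite dis_h0 // -(dis_h0 h).
Qed.

Lemma tail_subset_head (H H' : {set T}) h :
  is_head d b H -> is_head d b H' -> h \in H -> h \in H' ->
  anS d H \subset anS d H' -> H' :&: anS d H \subset H ->
  tail d b H \subset tail d b H'.
Proof.
move=> headH headH' hH hH' sAA' sHH'.
have sDD' : disH d b H \subset disH d b H'.
  by rewrite (disH_head headH hH) (disH_head headH' hH') dis_in_subset.
have sPP' : paS d (disH d b H) \subset paS d (disH d b H').
  by apply/bigcupsP => v /(subsetP sDD') vD'; apply: bigcup_sup.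
apply: setUSS sPP'.
apply/subsetP => x /setDP[xD xNH]; rewrite inE (subsetP sDD') // andbT.
apply: contra xNH => xH'; apply: (subsetP sHH'); rewrite inE xH'.
by move: xD; rewrite (disH_head headH hH) => /(subsetP (dis_in_sub _ _)).
Qed.

Lemma is_head_set3 i j k :
  is_head d b [set i; j] -> is_head d b [set i; k] ->
  ~~ connect d j k -> ~~ connect d k j -> is_head d b [set i; j; k].
Proof.
move=> headj headk nc_jk nc_kj.
have sub_an v : v \in [set i; j; k] -> an d v \subset anS d [set i; j; k].
  by move=> vH; apply: bigcup_sup.
have an_j : anS d [set i; j] \subset anS d [set i; j; k].
  by rewrite anS_set2 subUset !sub_an // !inE eqxx ?orbT.
have an_k : anS d [set i; k] \subset anS d [set i; j; k].
  by rewrite anS_set2 subUset !sub_an // !inE eqxx ?orbT.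
have dis_i (H : {set T}) v : is_head d b H -> i \in H -> v \in H ->
    anS d H \subset anS d [set i; j; k] ->
    v \in dis_in b (anS d [set i; j; k]) i.
  move=> headH iH vH sA; apply: (subsetP (dis_in_subset _ sA)).
  by rewrite -(disH_head headH iH) mem_disH.
split.
- by apply/set0Pn; exists i; rewrite !inE eqxx.
- apply/barren_idP => u v; rewrite !inE -!orbA.
  move=> /or3P[]/eqP-> /or3P[]/eqP-> // c;
    [ apply: (head_connect_eq headj _ _ c) | apply: (head_connect_eq headk _ _ c)
    | apply: (head_connect_eq headj _ _ c) | by move: c; rewrite (negbTE nc_jk)
    | apply: (head_connect_eq headk _ _ c) | by move: c; rewrite (negbTE nc_kj) ];
    by rewrite !inE eqxx ?orbT.
- exists i; first by rewrite !inE eqxx.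
  apply/subsetP => v; rewrite !in_setU !in_set1 -!orbA => /or3P[]/eqP->;
    [apply: (dis_i _ _ headj) | apply: (dis_i _ _ headj) | apply: (dis_i _ _ headk)];
    by rewrite // !inE eqxx ?orbT.
Qed.

Lemma simple_head_pair_connect i j k :
  simple_MAG d b -> is_head d b [set i; j] -> is_head d b [set i; k] ->
  j != i -> k != i -> j != k -> connect d j k || connect d k j.
Proof.
move=> simple headj headk nji nki njk; apply/negPn/negP.
rewrite negb_or => /andP[nc_jk nc_kj].
have := simple _ (is_head_set3 headj headk nc_jk nc_kj).
by rewrite -setUA cardsU1 cards2 !inE negb_or eq_sym nji eq_sym nki njk.
Qed.

End Symmetric.
End MixedGraph.

Theorem lemma3p14 (T : finType) (d b : rel T) (pos : T -> nat) (i : T) :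
  is_MAG d b -> simple_MAG d b -> topological d pos ->
  [/\ pa d i = tail d b [set i],
      (forall j, is_head d b [set i; j] -> pos j < pos i ->
         tail d b [set i] \subset tail d b [set i; j]) &
      (forall j j', is_head d b [set i; j] -> is_head d b [set i; j'] ->
         pos j < pos i -> pos j' < pos i -> pos j < pos j' ->
         tail d b [set i; j] \subset tail d b [set i; j'])].
Proof.
move=> [b_sym _ ancestral _] simple topo; rewrite tail_set1 //.
split=> // [j _ _ | j k headj headk ji ki jk].
  by apply: pa_subset_tail; rewrite !inE eqxx.
have nji : j != i by apply: contraTneq ji => ->; rewrite ltnn.
have nki : k != i by apply: contraTneq ki => ->; rewrite ltnn.
have njk : j != k by apply: contraTneq jk => ->; rewrite ltnn.
have nc_kj : ~~ connect d k j.
  by apply: contraTN jk => /(topological_connect topo); rewrite -leqNgt.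
have c_jk : connect d j k.
  by move: (simple_head_pair_connect b_sym simple headj headk nji nki njk);
     rewrite (negbTE nc_kj) orbF.
have nc_ki : ~~ connect d k i.
  apply: contra nki => c_ki; apply/eqP/(head_connect_eq headk _ _ c_ki).
    by rewrite !inE eqxx orbT.
  by rewrite !inE eqxx.
have k_notin_an : k \notin anS d [set i; j].
  by rewrite anS_set2 !inE negb_or nc_ki.
apply: (tail_subset_head b_sym headj headk (h := i)); rewrite ?set21 //.
  by rewrite !anS_set2 setUS // an_subset.
apply/subsetP => x; rewrite inE => /andP[/set2P[-> | ->]]; first by rewrite set21.
by rewrite (negbTE k_notin_an).
Qed.
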